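(* Let $H_0,H_1$ be complex Hilbert spaces, $G$ a densely defined closed operator from $H_0$ into $H_1$ and $D$ a densely defined closed operator from $H_1$ into $H_0$ with $-G^*\subset D$. If $u\in\mathrm{BD}(G)$, then $Gu\in\mathrm{BD}(D)$. If $q\in\mathrm{BD}(D)$, then $Dq\in\mathrm{BD}(G)$.
   Context: $\mathring D=-G^*$, $\mathring G=-D^*$. Domains carry graph inner products, e.g. $(u,v)_{\mathrm{dom}(G)}=(u,v)_{H_0}+(Gu,Gv)_{H_1}$. $\mathrm{BD}(G)$ is the orthogonal complement of $\mathrm{dom}(\mathring G)$ in $\mathrm{dom}(G)$ and $\mathrm{BD}(D)$ the orthogonal complement of $\mathrm{dom}(\mathring D)$ in $\mathrm{dom}(D)$. *)

From HB Require Import structures.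
From mathcomp Require Import all_boot all_order all_algebra.
From mathcomp Require Import reals.
From mathcomp Require Export complex.
Set Implicit Arguments. Unset Strict Implicit. Unset Printing Implicit Defensive.
Import Order.TTheory GRing.Theory Num.Theory.
Local Open Scope ring_scope.

Section Hilbert.
Variable R : realType.
Local Notation C := (R[i])%C.

Definition inner_product (V : lmodType C) (ip : V -> V -> C) : Prop :=
  [/\ (forall x y z, ip (x + y) z = ip x z + ip y z),
      (forall (a : C) x y, ip (a *: x) y = a * ip x y),
      (forall x y, ip y x = (ip x y)^*),
      (forall x, 0 <= ip x x) &
      (forall x, ip x x = 0 -> x = 0)].

Definition cvg_ip (V : lmodType C) (ip : V -> V -> C) (u : nat -> V) (x : V) : Prop :=
  forall e : C, 0 < e -> exists N, forall n, (N <= n)%N -> ip (u n - x) (u n - x) < e.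

Definition cauchy_ip (V : lmodType C) (ip : V -> V -> C) (u : nat -> V) : Prop :=
  forall e : C, 0 < e -> exists N, forall m n, (N <= m)%N -> (N <= n)%N ->
    ip (u m - u n) (u m - u n) < e.

Definition hilbert (V : lmodType C) (ip : V -> V -> C) : Prop :=
  inner_product ip /\ forall u, cauchy_ip ip u -> exists x, cvg_ip ip u x.

(* An (unbounded) linear operator V -> W is a pair (dom, A): a linear subspace
   dom of V and a map A, linear on dom (values outside dom are irrelevant). *)
Definition lin_op (V W : lmodType C) (dom : V -> Prop) (A : V -> W) : Prop :=
  [/\ dom 0,
      (forall x y, dom x -> dom y -> dom (x + y) /\ A (x + y) = A x + A y) &
      (forall (a : C) x, dom x -> dom (a *: x) /\ A (a *: x) = a *: A x)].

Definition densely_defined (V : lmodType C) (ip : V -> V -> C) (dom : V -> Prop) : Prop :=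
  forall x, exists u : nat -> V, (forall n, dom (u n)) /\ cvg_ip ip u x.

Definition closed_op (V W : lmodType C) (ipV : V -> V -> C) (ipW : W -> W -> C)
    (dom : V -> Prop) (A : V -> W) : Prop :=
  forall (u : nat -> V) x y, (forall n, dom (u n)) -> cvg_ip ipV u x ->
    cvg_ip ipW (fun n => A (u n)) y -> dom x /\ A x = y.

Definition adj_val (V W : lmodType C) (ipV : V -> V -> C) (ipW : W -> W -> C)
    (dom : V -> Prop) (A : V -> W) (y : W) (z : V) : Prop :=
  forall x, dom x -> ipW (A x) y = ipV x z.

Definition adj_dom (V W : lmodType C) (ipV : V -> V -> C) (ipW : W -> W -> C)
    (dom : V -> Prop) (A : V -> W) (y : W) : Prop :=
  exists z, adj_val ipV ipW dom A y z.

Definition neg_adj_sub (V W : lmodType C) (ipV : V -> V -> C) (ipW : W -> W -> C)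
    (dom : V -> Prop) (A : V -> W) (domB : W -> Prop) (B : W -> V) : Prop :=
  forall y z, adj_val ipV ipW dom A y z -> domB y /\ B y = - z.

(* BD(A): orthogonal complement in dom(A) (graph inner product) of
   dom(ring A) = dom(-B^* ) = dom(B^* ), where (domB, B) : W -> V. *)
Definition BD (V W : lmodType C) (ipV : V -> V -> C) (ipW : W -> W -> C)
    (dom : V -> Prop) (A : V -> W) (domB : W -> Prop) (B : W -> V) (u : V) : Prop :=
  dom u /\ forall v, adj_dom ipW ipV domB B v -> ipV u v + ipW (A u) (A v) = 0.

End Hilbert.

From HB Require Import structures.
From mathcomp Require Import all_boot all_order all_algebra.
From mathcomp Require Import reals complex ring lra.
From mathcomp Require Import boolp classical_sets.
Import Order.TTheory GRing.Theory Num.Theory.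
Local Open Scope ring_scope.

(* The graph of a closed operator A : V -> W is a closed subspace of V x W, hence equal
   to its double orthogonal complement; the projection theorem behind this is proved by
   the usual minimising-sequence argument with the parallelogram law.  A pair (p, r) is
   orthogonal to the graph of A exactly when A^* r = -p, so (x, y) lies in the graph as
   soon as <z, x> = <w, y> whenever A^* w = z.
   For G this turns -G^* ⊂ D into -D^* ⊂ G.  If u ∈ BD(G), then by -D^* ⊂ G the
   condition defining BD(G) is precisely this criterion for the pair (Gu, u) and the
   operator D, so Gu ∈ dom D and DGu = u; hence <Gu, w> + <DGu, Dw> = <Gu, w> - <u, G^* w>
   = 0 for every w ∈ dom G^*.  The second claim is the same argument with G and D
   exchanged. *)

Set Implicit Arguments.
Unset Strict Implicit.

(* [Num.Theory] shadows the coordinates of [R[i]] with its own [Re] and [Im]. *)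
Local Notation Re := complex.Re.
Local Notation Im := complex.Im.

Section RealFacts.
Variable R : realType.

Lemma exists_invS_lt (e : R) : 0 < e -> exists K : nat, K.+1%:R^-1 < e.
Proof.
move=> e0; exists (Num.truncn e^-1); have ie : 0 < e^-1 by rewrite invr_gt0.
have /andP[_ lt_e] : _ := truncn_itv (ltW ie).
by rewrite -[X in _ < X]invrK ltf_pV2 ?posrE ?ltr0Sn ?invr_gt0.
Qed.

Lemma invS_le (m n : nat) : (m <= n)%N -> n.+1%:R^-1 <= m.+1%:R^-1 :> R.
Proof. by move=> mn; rewrite lef_pV2 ?posrE ?ltr0Sn // ler_nat ltnS. Qed.

Lemma ler_lin_eps (x y c : R) : 0 <= c ->
  (forall e : R, 0 < e -> x <= y + c * e) -> x <= y.
Proof.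
move=> c0 xy; apply/ler_addgt0Pr => e e0.
have c1 : 0 < c + 1 by lra.
apply: (le_trans (xy _ (divr_gt0 e0 c1))); rewrite lerD2l mulrCA ger_pMr //.
by rewrite ler_pdivrMr // mul1r; lra.
Qed.

Lemma lin_le_quad_eq0 (c g : R) : (forall t : R, 2 * t * c <= t ^+ 2 * g) -> c = 0.
Proof.
move=> quad; have g0 : 0 <= g by have := quad 1; have := quad (-1); nra.
have sign_bound s : s ^+ 2 = 1 -> 2 * s * c <= 0.
  move=> s2; apply: ler_lin_eps g0 _ => t t0.
  rewrite -(ler_pM2l t0) add0r.
  have -> : t * (2 * s * c) = 2 * (s * t) * c by ring.
  have -> : t * (g * t) = (s * t) ^+ 2 * g by rewrite exprMn s2; ring.
  exact: quad.
have := sign_bound 1 (expr1n _ _).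
have := sign_bound (-1); rewrite sqrrN expr1n => /(_ erefl); lra.
Qed.

End RealFacts.

Section ComplexFacts.
Variable R : realType.
Local Notation C := (R[i])%C.

Lemma ReD (x y : C) : Re (x + y) = Re x + Re y.
Proof. by case: x; case: y. Qed.

Lemma ReN (x : C) : Re (- x) = - Re x.
Proof. by case: x. Qed.

Lemma ReMr (r : R) (z : C) : Re (r%:C%C * z) = r * Re z.
Proof. by case: z => a b /=; rewrite mul0r subr0. Qed.

Lemma ReJ (z : C) : Re z^* = Re z.
Proof. by case: z. Qed.

Lemma Re_conji_mul (z : C) : Re ('i%C^* * z) = Im z.
Proof. by case: z => a b /=; lra. Qed.

Lemma complex_eq0 (z : C) : Re z = 0 -> Im z = 0 -> z = 0.
Proof. by case: z => a b /= -> ->. Qed.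

Lemma ltc_Re (x e : C) : Im x = 0 -> 0 < e -> (x < e) = (Re x < Re e).
Proof. by move=> x_real; rewrite !ltcE /= x_real => /andP[/eqP-> _]; rewrite eqxx. Qed.

End ComplexFacts.

Section InnerProduct.
Variables (R : realType) (V : lmodType (R[i])%C) (ip : V -> V -> (R[i])%C).
Hypothesis ipP : inner_product ip.

Lemma ipDl x y z : ip (x + y) z = ip x z + ip y z. Proof. by case: ipP. Qed.
Lemma ipZl a x y : ip (a *: x) y = a * ip x y. Proof. by case: ipP. Qed.
Lemma ipC x y : ip y x = (ip x y)^*. Proof. by case: ipP. Qed.
Lemma ip_ge0 x : 0 <= ip x x. Proof. by case: ipP. Qed.
Lemma ip_eq0 x : ip x x = 0 -> x = 0. Proof. by case: ipP => _ _ _ _; apply. Qed.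

Lemma ipDr x y z : ip x (y + z) = ip x y + ip x z.
Proof. by rewrite ipC ipDl rmorphD /= -!ipC. Qed.

Lemma ipZr a x y : ip x (a *: y) = a^* * ip x y.
Proof. by rewrite ipC ipZl rmorphM /= -ipC. Qed.

Lemma ipNl x y : ip (- x) y = - ip x y.
Proof. by rewrite -scaleN1r ipZl mulN1r. Qed.

Lemma ipNr x y : ip x (- y) = - ip x y.
Proof. by rewrite ipC ipNl rmorphN /= -ipC. Qed.

Lemma ipBr x y z : ip x (y - z) = ip x y - ip x z.
Proof. by rewrite ipDr ipNr. Qed.

Definition normsq x := Re (ip x x).
Definition reip x y := Re (ip x y).

Lemma ip_normsq x : ip x x = (normsq x)%:C%C.
Proof.
by rewrite /normsq; move: (ger0_Im (ip_ge0 x)); case: (ip x x) => a b /= ->.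
Qed.

Lemma normsq_ge0 x : 0 <= normsq x.
Proof. by rewrite -lecR -ip_normsq ip_ge0. Qed.

Lemma ip_lt_Re x e : 0 < e -> (ip x x < e) = (normsq x < Re e).
Proof. by apply: ltc_Re; rewrite ip_normsq. Qed.

Lemma ip_lt_real x (e : R) : (ip x x < e%:C%C) = (normsq x < e).
Proof. by rewrite ip_normsq ltcR. Qed.

Lemma reipC x y : reip x y = reip y x.
Proof. by rewrite /reip ipC ReJ. Qed.

Lemma reipDl x y z : reip (x + y) z = reip x z + reip y z.
Proof. by rewrite /reip ipDl ReD. Qed.

Lemma reipNl x y : reip (- x) y = - reip x y.
Proof. by rewrite /reip ipNl ReN. Qed.

Lemma reipZl (r : R) x y : reip (r%:C%C *: x) y = r * reip x y.
Proof. by rewrite /reip ipZl ReMr. Qed.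

Lemma reipDr x y z : reip x (y + z) = reip x y + reip x z.
Proof. by rewrite reipC reipDl !(reipC _ x). Qed.

Lemma reipNr x y : reip x (- y) = - reip x y.
Proof. by rewrite reipC reipNl reipC. Qed.

Lemma reipZr (r : R) x y : reip x (r%:C%C *: y) = r * reip x y.
Proof. by rewrite reipC reipZl reipC. Qed.

Lemma normsqD x y : normsq (x + y) = normsq x + normsq y + 2 * reip x y.
Proof. rewrite /normsq -!/(reip _ _) reipDl !reipDr (reipC y x); lra. Qed.

Lemma normsqN x : normsq (- x) = normsq x.
Proof. by rewrite /normsq -!/(reip _ _) reipNl reipNr opprK. Qed.

Lemma normsqB x y : normsq (x - y) = normsq x + normsq y - 2 * reip x y.
Proof. rewrite normsqD normsqN reipNr; lra. Qed.

Lemma normsqZ (r : R) x : normsq (r%:C%C *: x) = r ^+ 2 * normsq x.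
Proof. by rewrite /normsq -!/(reip _ _) reipZl reipZr mulrA expr2. Qed.

Lemma parallelogram x y :
  normsq (x - y) + normsq (x + y) = 2 * normsq x + 2 * normsq y.
Proof. rewrite normsqB normsqD; lra. Qed.

Lemma reip_le (s : R) x y : 0 < s -> 2 * reip x y <= s * normsq x + s^-1 * normsq y.
Proof.
move=> s0; have := normsq_ge0 (s%:C%C *: x - y); rewrite normsqB normsqZ reipZl.
move=> sx_y; rewrite -(ler_pM2l s0) mulrDr (mulrA s s^-1) mulfV ?gt_eqF // mul1r.
by rewrite expr2 in sx_y; nra.
Qed.

Lemma normsqD_le (s : R) x y : 0 < s ->
  normsq (x + y) <= (1 + s) * normsq x + (1 + s^-1) * normsq y.
Proof. by move=> s0; rewrite normsqD; have := reip_le x y s0; lra. Qed.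

Lemma ip_eq0_reip x y : reip x y = 0 -> reip x ('i%C *: y) = 0 -> ip x y = 0.
Proof. by rewrite /reip ipZr Re_conji_mul; apply: complex_eq0. Qed.

Lemma normsq_le_of_cvg (x : V) (a : nat -> V) (a0 : V) (d : R) : 0 <= d ->
  cvg_ip ip a a0 -> (forall n, normsq (x - a n) < d + n.+1%:R^-1) ->
  normsq (x - a0) <= d.
Proof.
move=> d0 a_a0 near_d.
(* Split x - a0 = (x - a n) + (a n - a0) with weights 1 + s and 1 + s^-1, then let the
   error e and the weight s tend to 0. *)
apply: (ler_lin_eps (c := d)) => // s s0.
have s'0 : 0 < s^-1 by rewrite invr_gt0.
apply: (ler_lin_eps (c := (1 + s) + (1 + s^-1))) => [|e e0]; first lra.
have [K1 lt_e] := exists_invS_lt e0.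
have e0C : 0 < e%:C%C by rewrite ltcR.
have [K2 /(_ _ (leq_maxr K1 K2))] := a_a0 _ e0C.
set n := maxn K1 K2; rewrite ip_lt_real => an_a0.
have xan : normsq (x - a n) <= d + e.
  apply/ltW/(lt_le_trans (near_d n)); rewrite lerD2l.
  exact/ltW/(le_lt_trans (invS_le R (leq_maxl K1 K2))).
have := normsqD_le (x - a n) (a n - a0) s0; rewrite addrA subrK.
have m1 : (1 + s) * normsq (x - a n) <= (1 + s) * (d + e).
  by rewrite ler_wpM2l //; lra.
have m2 : (1 + s^-1) * normsq (a n - a0) <= (1 + s^-1) * e.
  by rewrite ler_wpM2l //; lra.
lra.
Qed.

End InnerProduct.

Section Projection.
Variables (R : realType) (V : lmodType (R[i])%C) (ip : V -> V -> (R[i])%C).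

Definition subspace (S : V -> Prop) : Prop :=
  [/\ S 0, forall x y, S x -> S y -> S (x + y) & forall a x, S x -> S (a *: x)].

Definition ip_closed (S : V -> Prop) : Prop :=
  forall u x, (forall n, S (u n)) -> cvg_ip ip u x -> S x.

Variable S : V -> Prop.
Hypotheses (ipH : hilbert ip) (S_sub : subspace S) (S_closed : ip_closed S).
Let ipP := ipH.1.

Lemma exists_dist_inf x : exists d : R, [/\ 0 <= d,
  forall b, S b -> d <= normsq ip (x - b) &
  forall e : R, 0 < e -> exists b, S b /\ normsq ip (x - b) < d + e].
Proof.
pose dists : set R := fun r => exists2 b, S b & r = normsq ip (x - b).
have [S0 _ _] := S_sub.
have dists_inf : has_inf dists.
  split; first by exists (normsq ip (x - 0)); exists 0.
  by exists 0 => _ [b _ ->]; apply: normsq_ge0.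
exists (inf dists); split.
- by apply: lb_le_inf dists_inf.1 _ => _ [b _ ->]; apply: normsq_ge0.
- by move=> b Sb; apply: (ge_inf dists_inf.2); exists b.
- by move=> e e0; have [_ [b Sb ->] ?] := inf_adherent e0 dists_inf; exists b.
Qed.

Lemma minimizing_cauchy x d (a : nat -> V) :
  (forall b, S b -> d <= normsq ip (x - b)) -> (forall n, S (a n)) ->
  (forall n, normsq ip (x - a n) < d + n.+1%:R^-1) -> cauchy_ip ip a.
Proof.
move=> d_low Sa near_d.
have [_ SD SZ] := S_sub.
have half_sum m n : (x - a m) + (x - a n) =
    (2 : R)%:C%C *: (x - (2^-1 : R)%:C%C *: (a m + a n)).
  rewrite scalerBr scalerA -rmorphM /= mulfV ?pnatr_eq0 // scale1r.
  by rewrite rmorph_nat scaler_nat mulr2n opprD addrACA.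
have close m n : normsq ip (a m - a n) <= 2 * m.+1%:R^-1 + 2 * n.+1%:R^-1.
  have := parallelogram ipP (x - a n) (x - a m).
  have -> : (x - a n) - (x - a m) = a m - a n by rewrite opprB addrC addrA subrK.
  rewrite half_sum normsqZ //.
  have := d_low _ (SZ (2^-1 : R)%:C%C _ (SD _ _ (Sa n) (Sa m))).
  have := near_d m; have := near_d n.
  (* [lra] does not take inverses of nat casts as atoms, so they are generalized first. *)
  move: (m.+1%:R^-1) (n.+1%:R^-1) => eps_m eps_n; lra.
move=> e e0; have Re_e : 0 < Re e by move: e0; rewrite ltcE => /andP[].
have [K lt_K] : exists K : nat, K.+1%:R^-1 < Re e / 4.
  by apply: exists_invS_lt; rewrite divr_gt0.
exists K => m n Km Kn; rewrite ip_lt_Re //; apply: le_lt_trans (close m n) _.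
have := invS_le R Km; have := invS_le R Kn.
move: (K.+1%:R^-1) (m.+1%:R^-1) (n.+1%:R^-1) lt_K => eps_K eps_m eps_n; lra.
Qed.

Lemma minimizer_orthogonal x a0 : S a0 ->
  (forall b, S b -> normsq ip (x - a0) <= normsq ip (x - b)) ->
  forall b, S b -> ip (x - a0) b = 0.
Proof.
move=> Sa0 a0_min; have [_ SD SZ] := S_sub.
suff reip0 b : S b -> reip ip (x - a0) b = 0.
  by move=> b Sb; apply: (ip_eq0_reip ipP); apply: reip0 => //; apply: SZ.
move=> Sb; apply: (@lin_le_quad_eq0 _ _ (normsq ip b)) => t.
have := a0_min _ (SD _ _ Sa0 (SZ t%:C%C _ Sb)).
by rewrite opprD addrA (normsqB ipP (x - a0)) normsqZ // reipZr //; lra.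
Qed.

Lemma exists_orth_proj x : exists2 a0, S a0 & forall b, S b -> ip (x - a0) b = 0.
Proof.
have [d [d0 d_low d_inf]] := exists_dist_inf x.
have eps_gt0 n : 0 < n.+1%:R^-1 :> R by rewrite invr_gt0.
have [a a_near] := choice (fun n => d_inf _ (eps_gt0 n)).
have Sa n : S (a n) by case: (a_near n).
have near_d n : normsq ip (x - a n) < d + n.+1%:R^-1 by case: (a_near n).
have [a0 a_a0] := ipH.2 _ (minimizing_cauchy d_low Sa near_d).
have Sa0 : S a0 := S_closed Sa a_a0.
exists a0 => //; apply: minimizer_orthogonal => // b Sb.
exact: le_trans (normsq_le_of_cvg ipP d0 a_a0 near_d) (d_low b Sb).
Qed.

Lemma closed_subspace_biorth x :
  (forall p, (forall b, S b -> ip p b = 0) -> ip p x = 0) -> S x.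
Proof.
move=> x_biorth; have [a0 Sa0 orth] := exists_orth_proj x.
have orth_x : ip (x - a0) x = 0 := x_biorth _ orth.
have : ip (x - a0) (x - a0) = 0 by rewrite ipBr // orth_x orth // subrr.
by move/(ip_eq0 ipP)/subr0_eq ->.
Qed.

End Projection.

Section PairSpace.
Variables (R : realType) (V W : lmodType (R[i])%C).
Variables (ipV : V -> V -> (R[i])%C) (ipW : W -> W -> (R[i])%C).

Definition ip_pair (u v : V * W) : (R[i])%C := ipV u.1 v.1 + ipW u.2 v.2.

Definition graph (dom : V -> Prop) (A : V -> W) (p : V * W) : Prop :=
  dom p.1 /\ A p.1 = p.2.

Hypotheses (ipVP : inner_product ipV) (ipWP : inner_product ipW).

Lemma inner_product_pair : inner_product ip_pair.
Proof.
rewrite /ip_pair; split=> [u v w|a u v|u v|u|[x y]].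
- have -> : (u + v).1 = u.1 + v.1 by [].
  have -> : (u + v).2 = u.2 + v.2 by [].
  by rewrite (ipDl ipVP) (ipDl ipWP) addrACA.
- have -> : (a *: u).1 = a *: u.1 by [].
  have -> : (a *: u).2 = a *: u.2 by [].
  by rewrite (ipZl ipVP) (ipZl ipWP) mulrDr.
- by rewrite rmorphD /= -(ipC ipVP) -(ipC ipWP).
- by rewrite addr_ge0 ?(ip_ge0 ipVP) ?(ip_ge0 ipWP).
- move/eqP; rewrite paddr_eq0 ?(ip_ge0 ipVP) ?(ip_ge0 ipWP) //.
  by case/andP=> /eqP/(ip_eq0 ipVP) /= -> /eqP/(ip_eq0 ipWP) /= ->.
Qed.

Lemma ip_pair_lt u e : ip_pair u u < e -> ipV u.1 u.1 < e /\ ipW u.2 u.2 < e.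
Proof.
move=> lt_e; split; apply: le_lt_trans lt_e.
- by rewrite lerDl (ip_ge0 ipWP).
- by rewrite lerDr (ip_ge0 ipVP).
Qed.

Lemma cvg_ip_pair_proj u z : cvg_ip ip_pair u z ->
  cvg_ip ipV (fun n => (u n).1) z.1 /\ cvg_ip ipW (fun n => (u n).2) z.2.
Proof.
by move=> u_z; split=> e /u_z[K uK]; exists K => n /uK /ip_pair_lt[].
Qed.

Lemma cauchy_ip_pair_proj u : cauchy_ip ip_pair u ->
  cauchy_ip ipV (fun n => (u n).1) /\ cauchy_ip ipW (fun n => (u n).2).
Proof.
by move=> u_c; split=> e /u_c[K uK]; exists K => m n Km /(uK _ _ Km) /ip_pair_lt[].
Qed.

Lemma cvg_ip_pair_of_proj u z :
  cvg_ip ipV (fun n => (u n).1) z.1 -> cvg_ip ipW (fun n => (u n).2) z.2 ->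
  cvg_ip ip_pair u z.
Proof.
move=> u1_z u2_z e e0; have e2 : 0 < e / 2%:R by rewrite divr_gt0.
have [K1 uK1] := u1_z _ e2; have [K2 uK2] := u2_z _ e2.
exists (maxn K1 K2) => n; rewrite geq_max => /andP[nK1 nK2].
by rewrite [e]splitr ltrD ?uK1 ?uK2.
Qed.

Lemma graph_subspace dom A : lin_op dom A -> subspace (graph dom A).
Proof.
case=> dom0 domD domZ; split.
- by split=> //; have := (domZ 0 0 dom0).2; rewrite !scale0r.
- by move=> [x1 y1] [x2 y2] [/= dx1 <-] [/= dx2 <-]; apply: domD.
- by move=> a [x y] [/= dx <-]; apply: domZ.
Qed.

Lemma graph_closed dom A : closed_op ipV ipW dom A -> ip_closed ip_pair (graph dom A).
Proof.
move=> A_closed u z u_graph /cvg_ip_pair_proj[u1_z u2_z].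
apply: A_closed u1_z _ => [n|e /u2_z[K uK]]; first by case: (u_graph n).
by exists K => n /uK; case: (u_graph n) => _ ->.
Qed.

End PairSpace.

Lemma hilbert_pair (R : realType) (V W : lmodType (R[i])%C)
    (ipV : V -> V -> (R[i])%C) (ipW : W -> W -> (R[i])%C) :
  hilbert ipV -> hilbert ipW -> hilbert (ip_pair ipV ipW).
Proof.
move=> [ipVP V_complete] [ipWP W_complete]; split; first exact: inner_product_pair.
move=> u /(cauchy_ip_pair_proj ipVP ipWP)[u1_cauchy u2_cauchy].
have [x u1_x] := V_complete _ u1_cauchy; have [y u2_y] := W_complete _ u2_cauchy.
by exists (x, y); apply: cvg_ip_pair_of_proj.
Qed.

Section ClosedOperator.
Variables (R : realType) (V W : lmodType (R[i])%C).
Variables (ipV : V -> V -> (R[i])%C) (ipW : W -> W -> (R[i])%C).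
Hypotheses (HV : hilbert ipV) (HW : hilbert ipW).
Variables (dom : V -> Prop) (A : V -> W).
Hypotheses (A_lin : lin_op dom A) (A_closed : closed_op ipV ipW dom A).
Let ipVP := HV.1.
Let ipWP := HW.1.

Lemma graph_orth_adj p r :
  (forall b, graph dom A b -> ip_pair ipV ipW (p, r) b = 0) ->
  adj_val ipV ipW dom A r (- p).
Proof.
move=> orth b db; have /eqP := orth (b, A b) (conj db erefl).
rewrite /ip_pair /= addrC addr_eq0 => /eqP rAb.
by rewrite (ipC ipWP r) rAb rmorphN /= -(ipC ipVP) (ipNr ipVP).
Qed.

Lemma closed_op_biorth x y :
  (forall w z, adj_val ipV ipW dom A w z -> ipV z x = ipW w y) -> dom x /\ A x = y.
Proof.
move=> adj_orth; suff: graph dom A (x, y) by [].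
apply: (closed_subspace_biorth (hilbert_pair HV HW) (graph_subspace A_lin)
  (graph_closed ipVP ipWP A_closed)).
move=> [p r] /graph_orth_adj /adj_orth; rewrite /ip_pair /= (ipNl ipVP) => <-.
exact: subrr.
Qed.

Lemma neg_adj_sub_sym (domB : W -> Prop) (B : W -> V) :
  neg_adj_sub ipV ipW dom A domB B -> neg_adj_sub ipW ipV domB B dom A.
Proof.
move=> A_B v z v_adjB; apply: closed_op_biorth => w z' w_adjA.
have [dw Bw] := A_B _ _ w_adjA.
have := v_adjB _ dw; rewrite Bw (ipNl ipVP) => vz.
by rewrite (ipNr ipWP) -vz opprK.
Qed.

End ClosedOperator.

Lemma BD_image (R : realType) (V W : lmodType (R[i])%C)
    (ipV : V -> V -> (R[i])%C) (ipW : W -> W -> (R[i])%C)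
    (dom : V -> Prop) (A : V -> W) (domB : W -> Prop) (B : W -> V) :
  hilbert ipV -> hilbert ipW -> lin_op domB B -> closed_op ipW ipV domB B ->
  neg_adj_sub ipV ipW dom A domB B -> neg_adj_sub ipW ipV domB B dom A ->
  forall u, BD ipV ipW dom A domB B u -> BD ipW ipV domB B dom A (A u).
Proof.
move=> HV HW B_lin B_closed A_B B_A u [du u_orth].
have [dAu BAu] : domB (A u) /\ B (A u) = u.
  apply: (closed_op_biorth HW HV B_lin B_closed) => w z w_adjB.
  have [dw Aw] := B_A _ _ w_adjB.
  have := u_orth w (ex_intro _ z w_adjB); rewrite Aw (ipNr HW.1) => /subr0_eq uw.
  by rewrite (ipC HW.1 (A u)) -uw -(ipC HV.1).
split=> // v [z v_adjA]; have [_ Bv] := A_B _ _ v_adjA.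
by rewrite BAu Bv (ipNr HV.1) (v_adjA u du) subrr.
Qed.

Theorem corollary2p6 (R : realType)
  (H0 H1 : lmodType (R[i])%C)
  (ip0 : H0 -> H0 -> (R[i])%C) (ip1 : H1 -> H1 -> (R[i])%C)
  (domG : H0 -> Prop) (G : H0 -> H1) (domD : H1 -> Prop) (D : H1 -> H0) :
  hilbert ip0 -> hilbert ip1 ->
  lin_op domG G -> densely_defined ip0 domG -> closed_op ip0 ip1 domG G ->
  lin_op domD D -> densely_defined ip1 domD -> closed_op ip1 ip0 domD D ->
  neg_adj_sub ip0 ip1 domG G domD D ->
  (forall u, BD ip0 ip1 domG G domD D u -> BD ip1 ip0 domD D domG G (G u)) /\
  (forall q, BD ip1 ip0 domD D domG G q -> BD ip0 ip1 domG G domD D (D q)).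
Proof.
move=> H0_hilbert H1_hilbert G_lin _ G_closed D_lin _ D_closed G_D.
have D_G := neg_adj_sub_sym H0_hilbert H1_hilbert G_lin G_closed G_D.
split.
- exact: (BD_image H0_hilbert H1_hilbert D_lin D_closed G_D D_G).
- exact: (BD_image H1_hilbert H0_hilbert G_lin G_closed D_G G_D).
Qed.
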